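(* Let $\mathcal{M}=\langle S,\to,L\rangle$ be a labeled transition system and let $B\subseteq S\times S$ be a reduced well-founded skipping relation (RWFSK) on $\mathcal{M}$. Then $B$ is a skipping simulation (SKS) on $\mathcal{M}$.
   Context: A labeled transition system is $\mathcal{M}=\langle S,\to,L\rangle$ where $S$ is a non-empty (possibly infinite) set of states, $\to\subseteq S\times S$ is left-total (every state has a successor), and $L$ is a function with domain $S$. A fullpath is an infinite sequence $\sigma$ of states with $\sigma(i)\to\sigma(i+1)$ for all $i\in\omega$; ''$\sigma$ is a fullpath starting at $s$'' means additionally $\sigma(0)=s$. $w\to^{+}v$ means there is a finite path $w=v_0\to\cdots\to v_k=v$ with $k\ge1$. Matching: let $\mathit{INC}$ be the set of strictly increasing infinite sequences of natural numbers starting at $0$. For a fullpath $\sigma$ and $\pi\in\mathit{INC}$, the $i$-th segment of $\sigma$ w.r.t. $\pi$ is the finite sequence $\sigma(\pi(i)),\dots,\sigma(\pi(i+1)-1)$. For a relation $B$, fullpaths $\sigma,\delta$ and $\pi,\xi\in\mathit{INC}$, $\mathit{corr}(B,\sigma,\pi,\delta,\xi)$ holds iff for every $i\in\omega$ and every state $s$ in the $i$-th segment of $\sigma$ w.r.t. $\pi$, $sB\delta(\xi(i))$. $\mathit{match}(B,\sigma,\delta)$ holds iff there exist $\pi,\xi\in\mathit{INC}$ with $\mathit{corr}(B,\sigma,\pi,\delta,\xi)$. $B\subseteq S\times S$ is a skipping simulation (SKS) on $\mathcal{M}$ iff for all $s,w$ with $sBw$: (SKS1) $L(s)=L(w)$,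 and (SKS2) for every fullpath $\sigma$ starting at $s$ there is a fullpath $\delta$ starting at $w$ with $\mathit{match}(B,\sigma,\delta)$. $B$ is an RWFSK on $\mathcal{M}$ iff (RWFSK1) for all $s,w$ with $sBw$, $L(s)=L(w)$; and (RWFSK2) there exist a well-founded set $\langle W,\prec\rangle$ and a function $\mathit{rankt}:S\times S\to W$ such that for all $s,u,w\in S$ with $s\to u$ and $sBw$, either (a) $uBw$ and $\mathit{rankt}(u,w)\prec\mathit{rankt}(s,w)$, or (b) there is $v$ with $w\to^{+}v$ and $uBv$. *)

From Stdlib Require Import Relations Wellfounded.

Record LTS := {
  lts_S : Type;
  lts_step : lts_S -> lts_S -> Prop;
  lts_Lbl : Type;
  lts_L : lts_S -> lts_Lbl;
  lts_nonempty : inhabited lts_S;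
  lts_total : forall s, exists u, lts_step s u
}.

Section Defs.
Variable M : LTS.
Notation St := (lts_S M).
Notation step := (lts_step M).
Notation L := (lts_L M).

Definition fullpath (sigma : nat -> St) : Prop :=
  forall i, step (sigma i) (sigma (S i)).

Definition fullpath_from (sigma : nat -> St) (s : St) : Prop :=
  fullpath sigma /\ sigma 0 = s.

Definition plus_step (w v : St) : Prop := clos_trans St step w v.

Definition INC (pi : nat -> nat) : Prop :=
  pi 0 = 0 /\ forall i, pi i < pi (S i).

Definition corr (B : St -> St -> Prop) (sigma : nat -> St) (pi : nat -> nat)
  (delta : nat -> St) (xi : nat -> nat) : Prop :=
  forall i j, pi i <= j < pi (S i) -> B (sigma j) (delta (xi i)).

Definition match_ (B : St -> St -> Prop) (sigma delta : nat -> St) : Prop :=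
  exists pi xi, INC pi /\ INC xi /\ corr B sigma pi delta xi.

Definition SKS (B : St -> St -> Prop) : Prop :=
  forall s w, B s w ->
    L s = L w /\
    (forall sigma, fullpath_from sigma s ->
       exists delta, fullpath_from delta w /\ match_ B sigma delta).

Definition RWFSK (B : St -> St -> Prop) : Prop :=
  (forall s w, B s w -> L s = L w) /\
  exists (W : Type) (prec : W -> W -> Prop) (rankt : St -> St -> W),
    well_founded prec /\
    forall s u w, step s u -> B s w ->
      (B u w /\ prec (rankt u w) (rankt s w)) \/
      (exists v, plus_step w v /\ B u v).
End Defs.

(* Along a fullpath sigma starting at s, with s B w, the RWFSK condition lets
   sigma advance while staying related to w, and each such advance strictly
   decreases the rank; by well-foundedness, after finitely many steps sigma
   reaches a state related to some v with w ->+ v.  Iterating (dependent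
   choice) cuts sigma into nonempty segments, the i-th related to w_i, where
   w_0 = w and w_i ->+ w_(i+1).  Gluing the finite paths w_i ->+ w_(i+1)
   gives the fullpath delta from w, with delta(xi i) = w_i at the segment
   boundaries xi. *)

From Stdlib Require Import Relations Arith Lia ClassicalEpsilon ChoiceFacts.

Lemma dependent_choice (X : Type) (R : X -> X -> Prop) :
  (forall x, exists y, R x y) ->
  forall x0, exists f : nat -> X, f 0 = x0 /\ forall n, R (f n) (f (S n)).
Proof. exact (functional_choice_imp_functional_dependent_choice choice (A := X) R). Qed.

Lemma clos_trans_finite_path (A : Type) (R : relation A) (x y : A) :
  clos_trans A R x y ->
  exists (k : nat) (f : nat -> A),
    0 < k /\ f 0 = x /\ f k = y /\ forall o, o < k -> R (f o) (f (S o)).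
Proof.
  intro Hxy; apply clos_trans_t1n in Hxy.
  induction Hxy as [x y Hxy | x y z Hxy _ [k [f [Hk [Hf0 [Hfk Hf]]]]]].
  - exists 1, (fun o => match o with 0 => x | _ => y end).
    repeat split; auto.
    intros o Ho; replace o with 0 by lia; exact Hxy.
  - exists (S k), (fun o => match o with 0 => x | S o' => f o' end).
    repeat split; auto; try lia.
    intros [|o] Ho; [rewrite Hf0; exact Hxy | apply Hf; lia].
Qed.

Section Concatenation.

Variables (A : Type) (k : nat -> nat) (f : nat -> nat -> A).
Hypothesis k_pos : forall i, 0 < k i.

(* Block [i] consists of the [k i] values [f i 0, ..., f i (k i - 1)]. *)
Fixpoint block_start (i : nat) : nat :=
  match i with 0 => 0 | S i => block_start i + k i end.

Fixpoint cursor (m : nat) : nat * nat :=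
  match m with
  | 0 => (0, 0)
  | S m => let '(i, o) := cursor m in
           if S o <? k i then (i, S o) else (S i, 0)
  end.

Definition concat (m : nat) : A := let '(i, o) := cursor m in f i o.

Lemma cursor_offset_lt (m : nat) : snd (cursor m) < k (fst (cursor m)).
Proof.
  induction m as [|m IH]; simpl; [apply k_pos|].
  destruct (cursor m) as [i o]; simpl in *.
  destruct (Nat.ltb_spec (S o) (k i)); simpl; auto.
Qed.

Lemma cursor_next_in_block (m i o : nat) :
  cursor m = (i, o) -> S o < k i -> cursor (S m) = (i, S o).
Proof.
  intros Hm Ho; simpl; rewrite Hm.
  destruct (Nat.ltb_spec (S o) (k i)); [reflexivity | lia].
Qed.

Lemma cursor_next_block (m i o : nat) :
  cursor m = (i, o) -> S o = k i -> cursor (S m) = (S i, 0).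
Proof.
  intros Hm Ho; simpl; rewrite Hm.
  destruct (Nat.ltb_spec (S o) (k i)); [lia | reflexivity].
Qed.

Lemma cursor_within_block (i o : nat) :
  cursor (block_start i) = (i, 0) -> o < k i ->
  cursor (block_start i + o) = (i, o).
Proof.
  intro Hi; induction o as [|o IH]; intro Ho.
  - rewrite Nat.add_0_r; exact Hi.
  - rewrite Nat.add_succ_r; apply cursor_next_in_block; [apply IH; lia | exact Ho].
Qed.

Lemma cursor_block_start (i : nat) : cursor (block_start i) = (i, 0).
Proof.
  induction i as [|i IH]; [reflexivity|].
  pose proof (k_pos i).
  replace (block_start (S i)) with (S (block_start i + (k i - 1))) by (simpl; lia).
  apply cursor_next_block with (k i - 1); [apply cursor_within_block | ]; auto; lia.
Qed.

Lemma concat_block_start (i : nat) : concat (block_start i) = f i 0.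
Proof. unfold concat; rewrite cursor_block_start; reflexivity. Qed.

Lemma block_start_INC : INC block_start.
Proof. split; [reflexivity | intro i; simpl; pose proof (k_pos i); lia]. Qed.

Lemma concat_steps (R : relation A) :
  (forall i o, o < k i -> R (f i o) (f i (S o))) ->
  (forall i, f i (k i) = f (S i) 0) ->
  forall m, R (concat m) (concat (S m)).
Proof.
  intros Hstep Hlink m; pose proof (cursor_offset_lt m) as Hm.
  unfold concat; simpl cursor.
  destruct (cursor m) as [i o]; simpl in Hm.
  destruct (Nat.ltb_spec (S o) (k i)).
  - apply Hstep; exact Hm.
  - rewrite <- Hlink; replace (k i) with (S o) by lia; apply Hstep; exact Hm.
Qed.

End Concatenation.

Lemma clos_trans_chain_concat (A : Type) (R : relation A) (a : nat -> A) :
  (forall i, clos_trans A R (a i) (a (S i))) ->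
  exists (delta : nat -> A) (xi : nat -> nat),
    INC xi /\ (forall m, R (delta m) (delta (S m))) /\
    forall i, delta (xi i) = a i.
Proof.
  intro Ha.
  destruct (choice (fun (i : nat) (kf : nat * (nat -> A)) =>
              0 < fst kf /\ snd kf 0 = a i /\ snd kf (fst kf) = a (S i) /\
              forall o, o < fst kf -> R (snd kf o) (snd kf (S o))))
    as [kf Hkf].
  { intro i; destruct (clos_trans_finite_path A R _ _ (Ha i)) as [k [f Hf]].
    exists (k, f); exact Hf. }
  pose (k i := fst (kf i)); pose (f i := snd (kf i)).
  assert (k_pos : forall i, 0 < k i) by (intro i; apply Hkf).
  exists (concat A k f), (block_start k); split; [|split].
  - exact (block_start_INC k k_pos).
  - apply (concat_steps A k f k_pos); [intro i; apply Hkf |].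
    intro i; unfold f, k.
    destruct (Hkf i) as [_ [_ [-> _]]], (Hkf (S i)) as [_ [-> _]]; reflexivity.
  - intro i; rewrite (concat_block_start A k f k_pos); apply Hkf.
Qed.

Section RankedTransfer.

Variables (M : LTS) (B : lts_S M -> lts_S M -> Prop).
Variables (W : Type) (prec : W -> W -> Prop) (rankt : lts_S M -> lts_S M -> W).
Hypothesis prec_wf : well_founded prec.
Hypothesis transfer : forall s u w, lts_step M s u -> B s w ->
  (B u w /\ prec (rankt u w) (rankt s w)) \/ (exists v, plus_step M w v /\ B u v).

Variable sigma : nat -> lts_S M.
Hypothesis sigma_fullpath : fullpath M sigma.

Lemma rwfsk_progress (p : nat) (w : lts_S M) :
  B (sigma p) w ->
  exists n v, p < n /\ plus_step M w v /\ B (sigma n) v /\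
              forall j, p <= j < n -> B (sigma j) w.
Proof.
  remember (rankt (sigma p) w) as r eqn:Er; revert p Er.
  induction r as [r IH] using (well_founded_induction prec_wf); intros p Er Hp.
  destruct (transfer _ _ _ (sigma_fullpath p) Hp) as [[Hp' Hrank] | [v [Hwv Hv]]].
  - destruct (IH _ ltac:(subst; exact Hrank) (S p) eq_refl Hp')
      as [n [v [Hn [Hwv [Hv Hseg]]]]].
    exists n, v; repeat split; auto; try lia.
    intros j Hj; destruct (Nat.eq_dec j p) as [->|]; [exact Hp | apply Hseg; lia].
  - exists (S p), v; repeat split; auto.
    intros j Hj; replace j with p by lia; exact Hp.
Qed.

Lemma rwfsk_segments (w : lts_S M) :
  B (sigma 0) w ->
  exists (pi : nat -> nat) (ws : nat -> lts_S M),
    INC pi /\ ws 0 = w /\ (forall i, plus_step M (ws i) (ws (S i))) /\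
    forall i j, pi i <= j < pi (S i) -> B (sigma j) (ws i).
Proof.
  intro Hw.
  pose (X := {c : nat * lts_S M | B (sigma (fst c)) (snd c)}).
  destruct (dependent_choice X (fun x y =>
      fst (proj1_sig x) < fst (proj1_sig y) /\
      plus_step M (snd (proj1_sig x)) (snd (proj1_sig y)) /\
      forall j, fst (proj1_sig x) <= j < fst (proj1_sig y) ->
                B (sigma j) (snd (proj1_sig x))))
    with (x0 := exist _ (0, w) Hw : X) as [c [Hc0 Hc]].
  { intros [[p v] Hv]; simpl in Hv.
    destruct (rwfsk_progress p v Hv) as [n [v' [Hn [Hvv' [Hv' Hseg]]]]].
    exists (exist _ (n, v') Hv'); simpl; auto. }
  exists (fun i => fst (proj1_sig (c i))), (fun i => snd (proj1_sig (c i))).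
  repeat split; [rewrite Hc0; reflexivity | apply Hc | rewrite Hc0; reflexivity
                | apply Hc | apply Hc].
Qed.

End RankedTransfer.

Theorem theorem2 (M : LTS) (B : lts_S M -> lts_S M -> Prop) :
  RWFSK M B -> SKS M B.
Proof.
  intros [Hlabel [W [prec [rankt [prec_wf transfer]]]]] s w Hsw.
  split; [exact (Hlabel s w Hsw)|].
  intros sigma [Hsigma Hsigma0]; subst s.
  destruct (rwfsk_segments M B W prec rankt prec_wf transfer sigma Hsigma w Hsw)
    as [pi [ws [Hpi [Hws0 [Hplus Hseg]]]]].
  destruct (clos_trans_chain_concat _ (lts_step M) ws Hplus)
    as [delta [xi [Hxi [Hdelta Hboundary]]]].
  exists delta; split.
  - split; [exact Hdelta | rewrite <- Hws0, <- Hboundary, (proj1 Hxi); reflexivity].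
  - exists pi, xi; repeat split; try apply Hpi; try apply Hxi.
    intros i j Hj; rewrite Hboundary; exact (Hseg i j Hj).
Qed.
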